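(* Let $X$ be a one-good random valuation whose values are bounded from below by some $x_0\ge0$ (i.e., $X\ge x_0$ almost surely). Let $\lambda$ be a real number and let $\mu=(q,s)$ be an IC one-good mechanism with $q(x)\le\lambda$ for all $x\ge x_0$. Then \[ R(\mu;X)\le(\lambda-q(x_0))\,\textsc{Rev}(X)+s(x_0). \]
   Context: A one-good random valuation is a nonnegative real random variable. A one-good mechanism is a pair $\mu=(q,s)$ of Borel functions $q:\mathbb{R}_+\to[0,1]$, $s:\mathbb{R}_+\to\mathbb{R}$, with buyer payoff $b(x)=q(x)x-s(x)$; it is IC if $b(x)\ge q(\tilde x)x-s(\tilde x)$ for all $x,\tilde x\ge0$, and IR if $b(x)\ge0$ for all $x$. $R(\mu;X)=\mathbb{E}[s(X)]$, and $\textsc{Rev}(X)$ is the supremum of $R(\mu;X)$ over all IC and IR mechanisms (equivalently $\sup_{p\ge0}p\,\mathbb{P}[X\ge p]$). *)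

From HB Require Import structures.
From mathcomp Require Import all_boot all_order all_algebra.
From mathcomp Require Import all_classical all_reals all_analysis.
Set Implicit Arguments. Unset Strict Implicit. Unset Printing Implicit Defensive.
Import Order.TTheory GRing.Theory Num.Theory.
Local Open Scope classical_set_scope.
Local Open Scope ring_scope.

Section Defs.
Context {R : realType}.

(* A one-good mechanism (q,s): Borel q : R_+ -> [0,1], s : R_+ -> R.
   We represent them as functions on R; only their values on R_+ matter. *)
Definition mechanism (q s : R -> R) : Prop :=
  measurable_fun setT q /\ measurable_fun setT s /\
  (forall x, 0 <= x -> 0 <= q x <= 1).

Definition payoff (q s : R -> R) (x : R) : R := q x * x - s x.

Definition IC (q s : R -> R) : Prop :=
  forall x xt, 0 <= x -> 0 <= xt -> q xt * x - s xt <= payoff q s x.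

Definition IR (q s : R -> R) : Prop :=
  forall x, 0 <= x -> 0 <= payoff q s x.

Context {d : measure_display} {T : measurableType d}.

Definition Rrev (P : probability T R) (X : T -> R) (q s : R -> R) : \bar R :=
  (\int[P]_w (s (X w))%:E)%E.

Definition Rev (P : probability T R) (X : T -> R) : \bar R :=
  ereal_sup [set Rrev P X qs.1 qs.2 |
             qs in [set qs : (R -> R) * (R -> R) |
                    mechanism qs.1 qs.2 /\ IC qs.1 qs.2 /\ IR qs.1 qs.2]].
End Defs.

From HB Require Import structures.
From mathcomp Require Import all_boot all_order all_algebra.
From mathcomp Require Import all_classical all_reals all_analysis.
From mathcomp Require Import measurable_realfun ring lra.
Import Order.TTheory GRing.Theory Num.Theory.
Local Open Scope classical_set_scope.
Local Open Scope ring_scope.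

(** IC forces [q] to be nondecreasing and pins the price increments
    [s x - s x0] between [x0 (q x - q x0)] and [x (q x - q x0)].  Hence, on
    [[x0, +oo)], the mechanism [((q - q x0) / c, (s - s x0) / c)] with
    [c = lam - q x0], set to [(0, 0)] below [x0], is again an IC mechanism with
    allocations in [[0, 1]], and it is IR because its menu contains the null
    option [(0, 0)].  Its revenue [R(mu'; X)] is at most [Rev X], and since
    [X >= x0] almost surely, [R(mu; X) = s x0 + c R(mu'; X)]. *)

Section IC_mechanisms.
Context {R : realType}.
Implicit Types (q s f : R -> R) (x c k : R).

Definition shift_above (x0 : R) f x : R := if x0 <= x then f x - f x0 else 0.

(** For [c = 0] this is the null function, as [0^-1 = 0]. *)
Definition scaled_shift (x0 : R) c f x : R := c^-1 * shift_above x0 f x.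

Lemma measurable_shift_above (x0 : R) f :
  measurable_fun setT f -> measurable_fun setT (shift_above x0 f).
Proof.
move=> mf.
have -> : shift_above x0 f = (f \- cst (f x0)) \* \1_(`[x0, +oo[%classic).
  apply/funext => x; rewrite /shift_above /= indicE; case: ifPn => x0x.
    by rewrite mem_set ?mulr1 //= in_itv /= x0x.
  by rewrite memNset ?mulr0 //= in_itv /= andbT; exact/negP.
by apply: measurable_funM => //; apply: measurable_funB.
Qed.

Lemma IC_scale {q s} k : IC q s -> 0 <= k ->
  IC (fun x => k * q x) (fun x => k * s x).
Proof.
move=> ic k0 x xt x0 xt0; rewrite /payoff -!mulrA -!mulrBr.
by apply: ler_wpM2l => //; exact: ic.
Qed.

Lemma IC_null_option_IR {q s} (x0 : R) :
  IC q s -> 0 <= x0 -> q x0 = 0 -> s x0 = 0 -> IR q s.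
Proof.
move=> ic x00 q0 s0 x x_ge0.
by have := ic x x0 x_ge0 x00; rewrite q0 s0 mul0r subr0.
Qed.

Section IC_properties.
Context {q s : R -> R} {x0 : R}.
Hypotheses (icqs : IC q s) (x0_ge0 : 0 <= x0).

Lemma IC_price_increment_ge {x} : x0 <= x -> x0 * (q x - q x0) <= s x - s x0.
Proof.
move=> x0x; have := icqs x0 x x0_ge0 (le_trans x0_ge0 x0x).
by rewrite /payoff; lra.
Qed.

Lemma IC_price_increment_le {x} : x0 <= x -> s x - s x0 <= x * (q x - q x0).
Proof.
move=> x0x; have := icqs x x0 (le_trans x0_ge0 x0x) x0_ge0.
by rewrite /payoff; lra.
Qed.

Lemma IC_alloc_mono {x} : x0 <= x -> q x0 <= q x.
Proof.
rewrite le_eqVlt => /predU1P[-> //|x0x].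
have := IC_price_increment_ge (ltW x0x); have := IC_price_increment_le (ltW x0x).
by nra.
Qed.

Lemma shift_above_price_ge0 x : 0 <= shift_above x0 s x.
Proof.
rewrite /shift_above; case: ifP => // x0x.
apply: le_trans (IC_price_increment_ge x0x).
by rewrite mulr_ge0 // subr_ge0 IC_alloc_mono.
Qed.

(** Deviating to a type below [x0] now yields the outside option [0], and a
    type below [x0] gains nothing from a type [xt >= x0] since prices above
    [x0] rise at least at rate [x0]. *)
Lemma IC_shift_above : IC (shift_above x0 q) (shift_above x0 s).
Proof.
move=> x xt x_ge0 xt_ge0; rewrite /payoff /shift_above.
have ic_x := icqs x xt x_ge0 xt_ge0; have ic_x0 := icqs x x0 x_ge0 x0_ge0.
rewrite /payoff in ic_x ic_x0.
case: ifPn => x0xt; case: ifPn => x0x; rewrite ?mul0r ?subr0 //; try lra.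
have := IC_price_increment_ge x0xt; have := IC_alloc_mono x0xt.
by move: x0x; rewrite -ltNge => ?; nra.
Qed.

Lemma price_shift_decomposition {c x} : 0 <= c -> x0 <= x ->
  q x <= q x0 + c -> s x = s x0 + c * scaled_shift x0 c s x.
Proof.
move=> c_ge0 x0x qx_le; rewrite /scaled_shift /shift_above x0x.
have [c0|cN0] := eqVneq c 0; last by rewrite mulrA mulfV // mul1r addrC subrK.
have qx : q x = q x0 by have := IC_alloc_mono x0x; move: qx_le; rewrite c0; lra.
have := IC_price_increment_ge x0x; have := IC_price_increment_le x0x.
by rewrite c0 qx subrr !mulr0 mul0r; lra.
Qed.

Lemma admissible_scaled_shift {c} :
  mechanism q s -> 0 <= c -> (forall x, x0 <= x -> q x <= q x0 + c) ->
  let q' := scaled_shift x0 c q in let s' := scaled_shift x0 c s in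
  mechanism q' s' /\ IC q' s' /\ IR q' s'.
Proof.
move=> [mq [ms _]] c_ge0 q_le q' s'.
have ic' : IC q' s' by apply: IC_scale; [exact: IC_shift_above | rewrite invr_ge0].
split; last first.
  split=> //; apply: (IC_null_option_IR x0 ic' x0_ge0);
    by rewrite /q' /s' /scaled_shift /shift_above lexx subrr mulr0.
have mscaled f : measurable_fun setT f -> measurable_fun setT (scaled_shift x0 c f).
  move=> mf; apply: measurable_funM; first exact: measurable_cst.
  exact: measurable_shift_above.
split; first exact: mscaled.
split; first exact: mscaled.
move=> x _; rewrite /q' /scaled_shift /shift_above.
case: ifPn => x0x; last by rewrite mulr0 ler01 lexx.
have [->|cN0] := eqVneq c 0; first by rewrite invr0 mul0r lexx ler01.
have c_gt0 : 0 < c by rewrite lt_neqAle eq_sym cN0.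
rewrite mulr_ge0 ?invr_ge0 ?subr_ge0 ?IC_alloc_mono //= mulrC ler_pdivrMr // mul1r.
by rewrite lerBlDl q_le.
Qed.

End IC_properties.
End IC_mechanisms.

Section revenue.
Context {d : measure_display} {T : measurableType d} {R : realType}.
Variable P : probability T R.
Local Open Scope ereal_scope.

Lemma Rrev_le_Rev (X : T -> R) {q s : R -> R} :
  mechanism q s -> IC q s -> IR q s -> Rrev P X q s <= Rev P X.
Proof. by move=> mech ic ir; apply: ereal_sup_ubound; exists (q, s). Qed.

Lemma integral_cstD_scale_le (a c : R) {f : T -> R} :
  measurable_fun setT f -> (forall w, (0 <= f w)%R) -> (0 <= c)%R ->
  \int[P]_w (a + c * f w)%:E <= a%:E + c%:E * \int[P]_w (f w)%:E.
Proof.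
move=> mf f_ge0 c_ge0.
have int_cst (r : R) : \int[P]_w r%:E = r%:E.
  by rewrite integral_cst // (_ : _ [set: T] = 1) ?mule1 //; exact: probability_setT.
have mEf : measurable_fun setT (EFin \o f) by exact/measurable_EFinP.
have [intf_y|intf_fin] := eqVneq (\int[P]_w (f w)%:E) +oo.
  have [->|cN0] := eqVneq c 0%R.
    under eq_integral => w _ do rewrite mul0r addr0.
    by rewrite int_cst mul0e adde0.
  by rewrite intf_y gt0_muley ?lte_fin ?lt_neqAle 1?eq_sym ?cN0 // addey ?leey.
have intf : P.-integrable setT (EFin \o f).
  apply/integrableP; split => //; rewrite (eq_integral (EFin \o f)) ?ltey // => w _.
  by rewrite gee0_abs ?lee_fin.
under eq_integral => w _ do rewrite EFinD EFinM.
rewrite integralD ?integralZl ?int_cst //; first exact: finite_measure_integrable_cst.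
exact: integrableZl.
Qed.

End revenue.

Theorem lemma2 (d : measure_display) (T : measurableType d) (R : realType)
  (P : probability T R) (X : {RV P >-> R}) (x0 lam : R) (q s : R -> R) :
  (forall w, 0 <= X w) ->
  0 <= x0 ->
  {ae P, forall w, x0 <= X w} ->
  mechanism q s -> IC q s ->
  (forall x, x0 <= x -> q x <= lam) ->
  (Rrev P X q s <= (lam - q x0)%:E * Rev P X + (s x0)%:E)%E.
Proof.
move=> _ x0_ge0 X_ge_x0 mech ic q_le; set c := lam - q x0.
have c_ge0 : 0 <= c by rewrite subr_ge0 q_le.
have q_le' x : x0 <= x -> q x <= q x0 + c by rewrite addrC subrK; exact: q_le.
have [mech' [ic' ir']] := admissible_scaled_shift ic x0_ge0 mech c_ge0 q_le'.
set s' := scaled_shift x0 c s.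
have [_ [ms' _]] := mech'; have [_ [ms _]] := mech.
have mX : measurable_fun setT X := measurable_funPT X.
have Rrev_eq : Rrev P X q s = (\int[P]_w (s x0 + c * s' (X w))%:E)%E.
  apply: ae_eq_integral => //; first exact/measurable_EFinP/measurableT_comp.
    apply/measurable_EFinP/measurable_funD => //.
    apply: measurable_funM; first exact: measurable_cst.
    exact: measurableT_comp.
  apply: filterS X_ge_x0 => w x0X _.
  by rewrite (price_shift_decomposition ic x0_ge0 c_ge0 x0X (q_le' _ x0X)).
have s'X_ge0 w : 0 <= s' (X w).
  by rewrite mulr_ge0 ?invr_ge0 // (shift_above_price_ge0 ic).
rewrite Rrev_eq addeC.
have ms'X : measurable_fun setT (fun w => s' (X w)) by exact: measurableT_comp.
apply: le_trans (integral_cstD_scale_le P (s x0) c ms'X s'X_ge0 c_ge0) _.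
by rewrite leeD2l // lee_wpmul2l ?lee_fin // (Rrev_le_Rev P X mech' ic' ir').
Qed.
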